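(* Let $\mathcal{X}$ be an $n$-premaniplex and $(\mathcal{Y},\eta)$ an $(n,m)$-voltage operator such that $\mathcal{X}\rtimes_\eta\mathcal{Y}$ is connected. Let $\gamma\in\operatorname{Aut}(\mathcal{X}\rtimes_\eta\mathcal{Y})$ and $\tau\in\operatorname{Aut}(\mathcal{Y})$. If for some flag $(x_0,y_0)$ and some $x_1\in\mathcal{X}$ we have $(x_0,y_0)\gamma=(x_1,y_0\tau)$, then $\gamma$ is a lift of $\tau$, i.e. the $\mathcal{Y}$-coordinate of $(x,y)\gamma$ is $y\tau$ for every flag $(x,y)$.
   Context: An $n$-premaniplex is an edge-coloured graph (semi-edges and parallel edges allowed) with colours $\{0,\dots,n-1\}$ such that every vertex (flag) is the start of exactly one dart of each colour, and for $|i-j|\ge2$ alternating $i,j$-paths of length 4 are closed; $x^i$ is the $i$-adjacent flag of $x$. $\mathcal{C}^n=\langle r_0,\dots,r_{n-1}\mid r_i^2,\ (r_ir_j)^2\ (|i-j|\ge2)\rangle$ acts on the left on flags by $r_ix=x^i$; automorphisms act on the right and commute with this action. For a flag $y$ of an $m$-premaniplex $\mathcal{Y}$ and $\omega\in\mathcal{C}^m$, $W_\omega(y)$ is the homotopy class of paths from $y$ whose colour sequence $i_1,\dots,i_k$ satisfies $r_{i_k}\cdots r_{i_1}=\omega$; these form the fundamental groupoid $\Pi(\mathcal{Y})$. A voltage assignment $\eta:\Pi(\mathcal{Y})\to\mathcal{C}^n$ satisfies $\eta(W_1W_2)=\eta(W_2)\eta(W_1)$; $(\mathcal{Y},\eta)$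 is an $(n,m)$-voltage operator. $\mathcal{X}\rtimes_\eta\mathcal{Y}$ has flags $\mathcal{X}\times\mathcal{Y}$ and $(x,y)^i=(\eta(W_{r_i}(y))x,r_iy)$, $i\in\{0,\dots,m-1\}$; hence $\omega(x,y)=(\eta(W_\omega(y))x,\omega y)$. *)

From mathcomp Require Import all_boot.
Set Implicit Arguments. Unset Strict Implicit. Unset Printing Implicit Defensive.

Definition far (i j : nat) : bool := (i.+1 < j) || (j.+1 < i).

Definition walk (k : nat) (T : Type) (adj : 'I_k -> T -> T) (z : T) (p : seq 'I_k) : T :=
  foldl (fun z i => adj i z) z p.

(* an element of C^k given by a word w = [a_1;...;a_l] denotes r_{a_1} ... r_{a_l};
   its left action on flags *)
Definition act (k : nat) (T : Type) (adj : 'I_k -> T -> T) (w : seq 'I_k) (z : T) : T :=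
  foldr (fun i z => adj i z) z w.

(* equality in the Coxeter group C^k = < r_i | r_i^2, (r_i r_j)^2 (|i-j|>=2) >
   of words; also, applied to colour sequences of paths, homotopy of paths
   with a common starting flag (backtracking and alternating 4-cycles) *)
Inductive coxeq (k : nat) : seq 'I_k -> seq 'I_k -> Prop :=
| cx_refl w : coxeq w w
| cx_sym u v : coxeq u v -> coxeq v u
| cx_trans u v w : coxeq u v -> coxeq v w -> coxeq u w
| cx_inv u v (i : 'I_k) : coxeq (u ++ i :: i :: v) (u ++ v)
| cx_comm u v (i j : 'I_k) : far i j -> coxeq (u ++ i :: j :: v) (u ++ j :: i :: v).

Record premaniplex (n : nat) := Premaniplex {
  flag :> Type;
  adj : 'I_n -> flag -> flag;
  adj_inv : forall i x, adj i (adj i x) = x;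
  adj_far : forall (i j : 'I_n) x, far i j -> adj i (adj j (adj i (adj j x))) = x
}.

(* A homotopy class of paths in Y is given by a start flag y and a colour
   sequence p (modulo coxeq); eta y p is (a word representing) its voltage.
   eta(W1 W2) = eta(W2) eta(W1). *)
Record voltage (m : nat) (Y : premaniplex m) (n : nat) := Voltage {
  eta :> flag Y -> seq 'I_m -> seq 'I_n;
  eta_homot : forall y p q, coxeq p q -> coxeq (eta y p) (eta y q);
  eta_comp : forall y p q,
    coxeq (eta y (p ++ q)) (eta (walk (@adj _ Y) y p) q ++ eta y p)
}.

Definition prod_adj (n m : nat) (X : premaniplex n) (Y : premaniplex m)
  (eta : voltage Y n) (i : 'I_m) (z : flag X * flag Y) : flag X * flag Y :=
  (act (@adj _ X) (eta z.2 [:: i]) z.1, adj i z.2).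

Definition connected (k : nat) (T : Type) (adj : 'I_k -> T -> T) : Prop :=
  forall a b : T, exists p, walk adj a p = b.

(* automorphism (written as a function; acts on the right in the paper) *)
Definition is_aut (k : nat) (T : Type) (adj : 'I_k -> T -> T) (f : T -> T) : Prop :=
  bijective f /\ forall i z, f (adj i z) = adj i (f z).

From mathcomp Require Import all_boot.

(* The Y-coordinate of [(x, y)^i] is [y^i], so both [z |-> (z gamma).2] and
   [z |-> z.2 tau] commute with every i-adjacency of X ⋊_eta Y; two such maps
   that agree at one flag of a connected structure agree everywhere. *)

Section ColourPreservingMaps.

Variables (k : nat) (T U : Type) (adjT : 'I_k -> T -> T) (adjU : 'I_k -> U -> U).

Definition colour_preserving (f : T -> U) : Prop :=
  forall i z, f (adjT i z) = adjU i (f z).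

Lemma walk_colour_preserving (f : T -> U) :
  colour_preserving f -> forall z p, f (walk adjT z p) = walk adjU (f z) p.
Proof. by move=> f_adj z p; elim: p z => [|i p IHp] z //=; rewrite IHp f_adj. Qed.

Lemma connected_colour_preserving_eq (f g : T -> U) (a : T) :
  connected adjT -> colour_preserving f -> colour_preserving g ->
  f a = g a -> forall b, f b = g b.
Proof.
move=> conn f_adj g_adj fa_ga b; have [p <-] := conn a b.
by rewrite !walk_colour_preserving // fa_ga.
Qed.

End ColourPreservingMaps.

Theorem lemma6p8 (n m : nat) (X : premaniplex n) (Y : premaniplex m)
  (eta : voltage Y n) (gamma : flag X * flag Y -> flag X * flag Y)
  (tau : flag Y -> flag Y) :
  connected (@prod_adj n m X Y eta) ->
  is_aut (@prod_adj n m X Y eta) gamma ->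
  is_aut (@adj _ Y) tau ->
  forall (x0 : flag X) (y0 : flag Y) (x1 : flag X),
    gamma (x0, y0) = (x1, tau y0) ->
  forall (x : flag X) (y : flag Y), (gamma (x, y)).2 = tau y.
Proof.
move=> conn [_ gamma_adj] [_ tau_adj] x0 y0 x1 gamma_x0y0 x y.
apply: (@connected_colour_preserving_eq _ _ _ _ (@adj _ Y)
          (fun z => (gamma z).2) (fun z => tau z.2) (x0, y0) conn).
- by move=> i z; rewrite /= gamma_adj.
- by move=> i z; rewrite /= tau_adj.
- by rewrite /= gamma_x0y0.
Qed.
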